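(* (1) For $2\le j\le d$, $m\in\mathbb Z$ and $n\in\mathbb Z_{\ge0}$, $v^{1j}(m,n)M_r^{(1)}=\{0\}$. (2) For $2\le i\le j\le d$ and $m,n\in\mathbb Z$ such that $v^{ij}(m,n)\in\mathcal B_+$, $v^{ij}(m,n)M_r^{(1)}=\{0\}$.
   Context: Fix an integer $d\ge 2$ and $r\in\mathbb{C}$. Let $\hat{\mathfrak h}$ be the complex Lie algebra with basis $\{v^i(m)\mid 1\le i\le d,\ m\in\mathbb{Z}\}\cup\{\mathbf c\}$ and bracket $[v^i(m),v^j(n)]=\delta_{m+n,0}\delta_{i,j}\,m\,\mathbf c$, $[\mathbf c,\hat{\mathfrak h}]=0$. In $A=U(\hat{\mathfrak h})/\langle \mathbf c-1\rangle$ let $v^{ij}(m,n)$ be the image of $v^i(m)v^j(n)$; then $v^{ij}(m,n)=v^{ji}(n,m)$ unless $i=j$ and $m=-n$, and $v^{ii}(m,-m)=v^{ii}(-m,m)+m$. Let $\mathcal B=\{v^{ii}(m,n)\mid 1\le i\le d,\ m\le n\}\cup\{v^{ij}(m,n)\mid 1\le i<j\le d,\ m,n\in\mathbb Z\}$; then $\mathcal B\cup\{1\}$ is linearly independent, $\mathcal L:=\mathrm{span}_{\mathbb C}\mathcal B\oplus\mathbb C\subset A$ contains every $v^{ij}(m,n)$ and is closed under $[x,y]=xy-yx$. With $\pi_1,\pi_2$ the projections of $\mathcal L$ onto $\mathrm{span}\,\mathcal B$ and onto $\mathbb C$, $[x,y]_r=\pi_1([x,y])+r\pi_2([x,y])$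 is a Lie bracket on $\mathcal L$; call this Lie algebra $\mathcal L_r$. Let $\mathcal B_+=\{v^{ij}(m,n)\in\mathcal B\mid m\ge 0\text{ or }n\ge 0\}$, $\mathcal L_r^+=\mathrm{span}\,\mathcal B_+\oplus\mathbb C$, and $M_r=U(\mathcal L_r)\otimes_{U(\mathcal L_r^+)}\mathbb C\mathbf 1$, where $\mathcal B_+$ acts by $0$ on $\mathbf 1$ and $s\in\mathbb C\subset\mathcal L_r$ acts by the scalar $s$. Let $\mathcal L_r^{(1)}$ be the Lie subalgebra of $\mathcal L_r$ generated by $\{v^{11}(m,n)\mid m,n\in\mathbb Z,\ m\le n\}$ and $M_r^{(1)}=U(\mathcal L_r^{(1)})\mathbf 1\subset M_r$. *)

From HB Require Import structures.
From mathcomp Require Import all_boot all_order all_algebra.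
From mathcomp Require Import Rstruct complex.
From mathcomp Require Import finmap monalg.

Set Implicit Arguments.
Unset Strict Implicit.
Unset Printing Implicit Defensive.

Import Order.TTheory GRing.Theory Num.Theory.
Local Open Scope ring_scope.

Definition CC : fieldType := (Rdefinitions.R)[i].

(* Basis of the Lie algebra L.                                          *)
(*   Some (i, j, m, n)  stands for v^{ij}(m,n)                           *)
(*   None               stands for the central element 1 in C \subset L *)
(* Only the tuples satisfying [validB d] are elements of the basis      *)
(* \mathcal B \cup {1}; other tuples are never used.                   *)
Definition Bas : Type := option (nat * nat * int * int).

Definition validB (d : nat) (b : Bas) : bool :=
  match b with
  | None => true
  | Some (i, j, m, n) =>
      [&& (1 <= i)%N, (i <= j)%N, (j <= d)%N & ((i < j)%N || (m <= n))]
  end.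

Definition inBplus (d : nat) (b : Bas) : bool :=
  match b with
  | None => false
  | Some (i, j, m, n) => validB d b && ((0 <= m) || (0 <= n))
  end.

(* The Lie algebra L (as a vector space): free vector space on Bas;    *)
(* its relevant part is the span of the valid basis vectors.            *)
Definition LL := {malg CC[Bas]}.

Definition eB (b : Bas) : LL := << 1 *g b >>.

(* The element v^{ij}(m,n) of A, written in the basis B \cup {1} of L,  *)
(* using v^{ij}(m,n) = v^{ji}(n,m) unless i = j and m = -n, and          *)
(* v^{ii}(m,-m) = v^{ii}(-m,m) + m.                                     *)
Definition vq (i j : nat) (m n : int) : LL :=
  if (i < j)%N then eB (Some (i, j, m, n))
  else if (j < i)%N then eB (Some (j, i, n, m))
  else if m <= n then eB (Some (i, i, m, n))
  else eB (Some (i, i, n, m)) + (if m + n == 0 then m%:~R else 0) *: eB None.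

Definition delta (b : bool) (k : int) : CC := if b then k%:~R else 0.

(* The commutator [x, y] = xy - yx computed in A, for basis elements, *)
(* expressed in the basis B \cup {1}:                                  *)
(* [v^i(a)v^j(b), v^k(c)v^l(e)] = [v^j(b),v^k(c)] v^i(a)v^l(e)         *)
(*   + [v^i(a),v^k(c)] v^j(b)v^l(e) + [v^j(b),v^l(e)] v^k(c)v^i(a)     *)
(*   + [v^i(a),v^l(e)] v^k(c)v^j(b),                                   *)
(* with [v^p(s), v^q(t)] = delta_{pq} delta_{s+t,0} s.  The central    *)
(* element None brackets to 0 with everything.                         *)
Definition brA (p q : Bas) : LL :=
  match p, q with
  | Some (i, j, a, b), Some (k, l, c, e) =>
      delta ((j == k) && (b + c == 0)) b *: vq i l a e
    + delta ((i == k) && (a + c == 0)) a *: vq j l b e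
    + delta ((j == l) && (b + e == 0)) b *: vq k i c a
    + delta ((i == l) && (a + e == 0)) a *: vq k j c b
  | _, _ => 0
  end.

(* x |-> pi_1(x) + r pi_2(x) *)
Definition rscale (r : CC) (x : LL) : LL := x + ((r - 1) * x@_None) *: eB None.

Definition brr (r : CC) (x y : LL) : LL :=
  \sum_(p <- msupp x) \sum_(q <- msupp y)
     (x@_p * y@_q) *: rscale r (brA p q).

(* Tensor algebra T(L) (basis: words over Bas), and the induced module *)
(* M_r = U(L_r) (x)_{U(L_r^+)} C1 realised as the quotient of T(L) by  *)
(* the subspace N = J + T(L) . {b, 1_L - 1 : b in B_+}, where J is the  *)
(* two-sided ideal defining U(L_r).  The vector 1 of M_r is the class  *)
(* of the empty word, and x in L_r acts by left multiplication.        *)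
Definition TT := {malg CC[seq Bas]}.

Definition eW (w : seq Bas) : TT := << 1 *g w >>.

Definition lmul (x : LL) (t : TT) : TT :=
  \sum_(p <- msupp x) \sum_(w <- msupp t) (x@_p * t@_w) *: eW (p :: w).

Definition ins (u : seq Bas) (z : LL) (w : seq Bas) : TT :=
  \sum_(p <- msupp z) z@_p *: eW (u ++ p :: w).

Inductive inN (d : nat) (r : CC) : TT -> Prop :=
| inN0 : inN d r 0
| inNadd s t : inN d r s -> inN d r t -> inN d r (s + t)
| inNscale (c : CC) t : inN d r t -> inN d r (c *: t)
| inNrel (u w : seq Bas) (x y : Bas) :
    all (validB d) u -> all (validB d) w -> validB d x -> validB d y ->
    inN d r (eW (u ++ x :: y :: w) - eW (u ++ y :: x :: w)
             - ins u (brr r (eB x) (eB y)) w)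
| inNplus (u : seq Bas) (b : Bas) :
    all (validB d) u -> inBplus d b -> inN d r (eW (rcons u b))
| inNone (u : seq Bas) :
    all (validB d) u -> inN d r (eW (rcons u None) - eW u).

Definition zeroM (d : nat) (r : CC) (t : TT) : Prop := inN d r t.

Inductive inL1 (r : CC) : LL -> Prop :=
| inL1gen (m n : int) : m <= n -> inL1 r (eB (Some (1%N, 1%N, m, n)))
| inL10 : inL1 r 0
| inL1add x y : inL1 r x -> inL1 r y -> inL1 r (x + y)
| inL1scale (c : CC) x : inL1 r x -> inL1 r (c *: x)
| inL1br x y : inL1 r x -> inL1 r y -> inL1 r (brr r x y).

(* representatives in T(L) of M_r^{(1)} = U(L_r^{(1)}) 1 *)
Inductive inM1 (r : CC) : TT -> Prop :=
| inM1one : inM1 r (eW [::])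
| inM1act x t : inL1 r x -> inM1 r t -> inM1 r (lmul x t)
| inM1add s t : inM1 r s -> inM1 r t -> inM1 r (s + t)
| inM1scale (c : CC) t : inM1 r t -> inM1 r (c *: t).

From HB Require Import structures.
From mathcomp Require Import all_boot all_order all_algebra.
From mathcomp Require Import Rstruct complex.
From mathcomp Require Import finmap monalg.
Import Order.TTheory GRing.Theory Num.Theory.
Local Open Scope ring_scope.

(* Let N be the kernel of T(L) -> M_r.  Left multiplication by valid
   elements of L preserves N, and modulo N it turns commutators into
   brackets: x y t = y x t + [x, y]_r t.  Hence if S is a set of elements of
   B_+ whose span is stable under bracketing with L_r^(1), the span of S
   kills 1 (by definition of M_r) and, by induction on U(L_r^(1)) 1, all of
   M_r^(1).  Bracketing with v^11(c, e) only moves the first mode of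
   v^1j(k, n) (j >= 2) and kills v^ij(m, n) for i, j >= 2, so both families
   of the statement qualify. *)

Section LinearExtension.
Context {R : nzRingType} {K : choiceType}.

Definition mlext {V : lmodType R} (F : K -> V) (g : {malg R[K]}) : V :=
  \sum_(k <- msupp g) g@_k *: F k.

Definition msupp_in (P : pred K) (g : {malg R[K]}) : bool := all P (msupp g).

Lemma mlextEw {V : lmodType R} (F : K -> V) g (dom : {fset K}) :
  (msupp g `<=` dom)%fset -> mlext F g = \sum_(k <- dom) g@_k *: F k.
Proof.
move=> le; rewrite /mlext (big_fset_incl _ le) //= => k _ /mcoeff_outdom ->.
by rewrite scale0r.
Qed.

Lemma mlext_linear {V : lmodType R} (F : K -> V) : linear (mlext F).
Proof.
move=> a g h; have le : (msupp (a *: g + h) `<=` msupp g `|` msupp h)%fset.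
  exact: fsubset_trans (msuppD_le _ _) (fsetSU _ (msuppZ_le _ _)).
rewrite (mlextEw _ _ _ le) (mlextEw _ _ _ (fsubsetUl _ (msupp h))).
rewrite (mlextEw _ _ _ (fsubsetUr (msupp g) _)) scaler_sumr -big_split /=.
by apply: eq_bigr => k _; rewrite mcoeffD mcoeffZ scalerDl scalerA.
Qed.

Lemma mlextU {V : lmodType R} (F : K -> V) k : mlext F << 1 *g k >> = F k.
Proof. by rewrite (mlextEw _ _ _ msuppU_le) big_seq_fset1 mcoeffUU scale1r. Qed.

Lemma eq_mlext {V : lmodType R} (F F' : K -> V) g :
  F =1 F' -> mlext F g = mlext F' g.
Proof. by move=> eqF; apply: eq_bigr => k _; rewrite eqF. Qed.

Lemma mlext_closed {V : lmodType R} (Q : V -> Prop) (F : K -> V) g :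
  Q 0 -> (forall u v, Q u -> Q v -> Q (u + v)) ->
  (forall a u, Q u -> Q (a *: u)) ->
  (forall k, k \in msupp g -> Q (F k)) -> Q (mlext F g).
Proof.
move=> Q0 QD QZ QF; rewrite /mlext big_seq.
by apply: big_ind => // k /QF; apply: QZ.
Qed.

Lemma linear_mlext {V W : lmodType R} (f : V -> W) (F : K -> V) g :
  linear f -> f (mlext F g) = mlext (fun k => f (F k)) g.
Proof.
move=> linf; rewrite /mlext; elim: (msupp g : seq K) => [|k s IH].
  by rewrite !big_nil -[0]subr0 (zmod_morphism_linear linf) subrr.
by rewrite !big_cons linf IH.
Qed.

Lemma mlext_monalgU g : mlext (fun k => << 1 *g k >>) g = g.
Proof.
rewrite [RHS]monalgE; apply: eq_bigr => k _; apply/malgP => k'.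
by rewrite mcoeffZ !mcoeffU mulrnAr mulr1.
Qed.

Lemma linear_monalgE {W : lmodType R} (f : {malg R[K]} -> W) g :
  linear f -> f g = mlext (fun k => f << 1 *g k >>) g.
Proof. by move=> linf; rewrite -linear_mlext // mlext_monalgU. Qed.

Lemma msupp_in0 (P : pred K) : msupp_in P 0.
Proof. by rewrite /msupp_in msupp0. Qed.

Lemma msupp_inU (P : pred K) k : P k -> msupp_in P << 1 *g k >>.
Proof.
by move=> Pk; apply/allP => k' /(fsubsetP msuppU_le); rewrite inE => /eqP ->.
Qed.

Lemma msupp_inD (P : pred K) g h :
  msupp_in P g -> msupp_in P h -> msupp_in P (g + h).
Proof.
move=> /allP Pg /allP Ph; apply/allP => k /(fsubsetP (msuppD_le _ _)).
by rewrite in_fsetU => /orP[/Pg | /Ph].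
Qed.

Lemma msupp_inZ (P : pred K) a g : msupp_in P g -> msupp_in P (a *: g).
Proof. by move=> /allP Pg; apply/allP => k /(fsubsetP (msuppZ_le _ _)) /Pg. Qed.

End LinearExtension.

Lemma msupp_in_mlext {R : nzRingType} {K K' : choiceType} (P : pred K)
    (F : K' -> {malg R[K]}) g :
  (forall k, k \in msupp g -> msupp_in P (F k)) -> msupp_in P (mlext F g).
Proof.
apply: (mlext_closed (fun h => msupp_in P h)); first exact: msupp_in0.
  exact: msupp_inD.
exact: msupp_inZ.
Qed.

Section LinearFunctions.
Context {R : nzRingType} {U V W : lmodType R}.

Lemma linear_comp (f : U -> V) (g : V -> W) :
  linear f -> linear g -> linear (fun u => g (f u)).
Proof. by move=> linf ling a u v; rewrite linf ling. Qed.

Lemma linearB_fun (f g : U -> V) :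
  linear f -> linear g -> linear (fun u => f u - g u).
Proof. by move=> linf ling a u v; rewrite linf ling scalerBr opprD addrACA. Qed.

End LinearFunctions.

Lemma lmulE x t : lmul x t = mlext (fun p => mlext (fun w => eW (p :: w)) t) x.
Proof.
apply: eq_bigr => p _; rewrite scaler_sumr.
by apply: eq_bigr => w _; rewrite scalerA.
Qed.

Lemma lmulE_swap x t :
  lmul x t = mlext (fun w => mlext (fun p => eW (p :: w)) x) t.
Proof.
rewrite /lmul exchange_big; apply: eq_bigr => w _; rewrite scaler_sumr.
by apply: eq_bigr => p _; rewrite scalerA mulrC.
Qed.

Lemma lmul_linear_l t : linear (lmul^~ t).
Proof. by move=> a u v; rewrite !lmulE mlext_linear. Qed.

Lemma lmul_linear_r x : linear (lmul x).
Proof. by move=> a u v; rewrite !lmulE_swap mlext_linear. Qed.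

Lemma lmulUl p t : lmul (eB p) t = mlext (fun w => eW (p :: w)) t.
Proof. by rewrite lmulE mlextU. Qed.

Lemma lmulU p w : lmul (eB p) (eW w) = eW (p :: w).
Proof. by rewrite lmulUl mlextU. Qed.

Lemma lmul_eW z w : lmul z (eW w) = ins [::] z w.
Proof. by rewrite lmulE_swap mlextU. Qed.

Lemma lmulBr x u v : lmul x (u - v) = lmul x u - lmul x v.
Proof. exact: zmod_morphism_linear (lmul_linear_r x) u v. Qed.

Lemma lmul0r x : lmul x 0 = 0.
Proof. by have := lmulBr x 0 0; rewrite subr0 subrr. Qed.

Lemma lmulDr x u v : lmul x (u + v) = lmul x u + lmul x v.
Proof. exact: (GRing.semilinear_linear (lmul_linear_r x)).2. Qed.

Lemma lmulZr x a u : lmul x (a *: u) = a *: lmul x u.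
Proof. exact: scalable_linear (lmul_linear_r x) a u. Qed.

Lemma lmul_ins p u z w : lmul (eB p) (ins u z w) = ins (p :: u) z w.
Proof.
rewrite [ins u z w]/ins -/(mlext _ z) linear_mlext; last exact: lmul_linear_r.
by apply: eq_mlext => q; rewrite lmulU.
Qed.

Lemma brrE r x y :
  brr r x y = mlext (fun p => mlext (fun q => rscale r (brA p q)) y) x.
Proof.
apply: eq_bigr => p _; rewrite scaler_sumr.
by apply: eq_bigr => q _; rewrite scalerA.
Qed.

Lemma brrE_swap r x y :
  brr r x y = mlext (fun q => mlext (fun p => rscale r (brA p q)) x) y.
Proof.
rewrite /brr exchange_big; apply: eq_bigr => q _; rewrite scaler_sumr.
by apply: eq_bigr => p _; rewrite scalerA mulrC.
Qed.

Lemma brr_linear_l r y : linear (brr r ^~ y).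
Proof. by move=> a u v; rewrite !brrE mlext_linear. Qed.

Lemma brr_linear_r r x : linear (brr r x).
Proof. by move=> a u v; rewrite !brrE_swap mlext_linear. Qed.

Section RelationSpace.
Variables (d : nat) (r : CC).

Lemma inN_mlext {K : choiceType} (F : K -> TT) (g : {malg CC[K]}) :
  (forall k, k \in msupp g -> inN d r (F k)) -> inN d r (mlext F g).
Proof. apply: mlext_closed; [exact: inN0 | exact: inNadd | exact: inNscale]. Qed.

Lemma inN_linear {K : choiceType} (f : {malg CC[K]} -> TT) g : linear f ->
  (forall k, k \in msupp g -> inN d r (f << 1 *g k >>)) -> inN d r (f g).
Proof. by move=> linf; rewrite (linear_monalgE _ _ linf); apply: inN_mlext. Qed.

Lemma inN_lmul x s : msupp_in (validB d) x -> inN d r s -> inN d r (lmul x s).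
Proof.
move=> /allP validx Ns; rewrite lmulE; apply: inN_mlext => p /validx validp.
rewrite -lmulUl; elim: Ns => {s}.
- by rewrite lmul0r; apply: inN0.
- by move=> s t _ Ns _ Nt; rewrite lmulDr; apply: inNadd.
- by move=> c t _ Nt; rewrite lmulZr; apply: inNscale.
- move=> u w x0 y0 validu validw validx0 validy0.
  rewrite !lmulBr !lmulU lmul_ins.
  by apply: (@inNrel d r (p :: u)); rewrite //= validp.
- move=> u b validu b_plus; rewrite lmulU.
  by apply: (@inNplus d r (p :: u)); rewrite //= validp.
- move=> u validu; rewrite lmulBr !lmulU.
  by apply: (@inNone d r (p :: u)); rewrite //= validp.
Qed.

Lemma inN_commutator x y t :
  msupp_in (validB d) x -> msupp_in (validB d) y -> msupp_in (all (validB d)) t ->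
  inN d r (lmul x (lmul y t) - lmul y (lmul x t) - lmul (brr r x y) t).
Proof.
move=> /allP validx /allP validy /allP validt.
apply: (inN_linear (fun x => lmul x (lmul y t) - lmul y (lmul x t)
                             - lmul (brr r x y) t)).
  apply: linearB_fun; last first.
    exact: linear_comp (brr_linear_l r y) (lmul_linear_l t).
  apply: linearB_fun; first exact: lmul_linear_l.
  exact: linear_comp (lmul_linear_l t) (lmul_linear_r y).
move=> p /validx validp; rewrite -/(eB p).
apply: (inN_linear (fun y => lmul (eB p) (lmul y t) - lmul y (lmul (eB p) t)
                             - lmul (brr r (eB p) y) t)).
  apply: linearB_fun; last first.
    exact: linear_comp (brr_linear_r r _) (lmul_linear_l t).
  apply: linearB_fun; last exact: lmul_linear_l.
  exact: linear_comp (lmul_linear_l t) (lmul_linear_r _).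
move=> q /validy validq; rewrite -/(eB q).
apply: (inN_linear (fun t => lmul (eB p) (lmul (eB q) t)
                             - lmul (eB q) (lmul (eB p) t)
                             - lmul (brr r (eB p) (eB q)) t)).
  apply: linearB_fun; last exact: lmul_linear_r.
  by apply: linearB_fun; apply: linear_comp; apply: lmul_linear_r.
move=> w /validt validw; rewrite -/(eW w) !lmulU lmul_eW.
exact: (@inNrel d r [::] w p q isT validw validp validq).
Qed.

End RelationSpace.

Lemma rscale_id r z : z@_None = 0 -> rscale r z = z.
Proof. by move=> z0; rewrite /rscale z0 mulr0 scale0r addr0. Qed.

Lemma msupp_in_rscale r (P : pred Bas) z :
  P None -> msupp_in P z -> msupp_in P (rscale r z).
Proof. by move=> PN Pz; apply/msupp_inD/msupp_inZ/msupp_inU. Qed.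

Lemma vq_lt i j m n : (i < j)%N -> vq i j m n = eB (Some (i, j, m, n)).
Proof. by move=> lt_ij; rewrite /vq lt_ij. Qed.

Lemma vq_gt i j m n : (j < i)%N -> vq i j m n = eB (Some (j, i, n, m)).
Proof. by move=> lt_ji; rewrite /vq ltnNge (ltnW lt_ji) lt_ji. Qed.

Lemma vq_valid d i j m n :
  validB d (Some (i, j, m, n)) -> vq i j m n = eB (Some (i, j, m, n)).
Proof.
case/and4P=> _ le_ij _; rewrite /vq; case: (ltnP i j) => // le_ji /= le_mn.
have eq_ji : j = i by apply/eqP; rewrite eqn_leq le_ji le_ij.
by rewrite eq_ji ltnn le_mn.
Qed.

Lemma scale_delta_false k (v : LL) : delta false k *: v = 0.
Proof. by rewrite /delta scale0r. Qed.

(* The generators v^11(a, b), a <= b, of L_r^(1) and the central 1: their span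
   contains L_r^(1), the bracket of two generators having a central part. *)
Definition L11_basis (q : Bas) : bool :=
  if q is Some (i, j, a, b) then [&& i == 1%N, j == 1%N & a <= b] else true.

Lemma L11_valid d q : (1 <= d)%N -> L11_basis q -> validB d q.
Proof.
case: q => [[[[i j] a] b]|] //= d_gt0 /and3P[/eqP-> /eqP-> le_ab].
by rewrite d_gt0 le_ab.
Qed.

Lemma vq11_L11 m n : msupp_in L11_basis (vq 1 1 m n).
Proof.
rewrite /vq /=; case: leP => [le_mn | /ltW le_nm].
  by apply: msupp_inU; rewrite /= le_mn.
apply: msupp_inD; first by apply: msupp_inU; rewrite /= le_nm.
exact/msupp_inZ/msupp_inU.
Qed.

Lemma brA_L11 p q : L11_basis p -> L11_basis q -> msupp_in L11_basis (brA p q).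
Proof.
case: p q => [[[[i j] a] b]|] [[[[k l] c] e]|] //=;
  try by move=> *; apply: msupp_in0.
move=> /and3P[/eqP-> /eqP-> _] /and3P[/eqP-> /eqP-> _].
by do 3?apply: msupp_inD; apply/msupp_inZ/vq11_L11.
Qed.

Lemma inL1_L11 {r y} : inL1 r y -> msupp_in L11_basis y.
Proof.
elim=> {y} [m n le_mn | | x y _ Lx _ Ly | c x _ Lx | x y _ /allP Lx _ /allP Ly].
- by apply: msupp_inU; rewrite /= le_mn.
- exact: msupp_in0.
- exact: msupp_inD.
- exact: msupp_inZ.
- rewrite brrE; apply: msupp_in_mlext => p /Lx Lp.
  apply: msupp_in_mlext => q /Ly Lq.
  exact/msupp_in_rscale/brA_L11.
Qed.

Lemma inM1_valid {d r t} : (1 <= d)%N -> inM1 r t -> msupp_in (all (validB d)) t.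
Proof.
move=> d_gt0.
elim=> {t} [| x t Lx _ /allP validt | s t _ valids _ validt | c t _ validt].
- exact: msupp_inU.
- rewrite lmulE; apply: msupp_in_mlext => p /(allP (inL1_L11 Lx)) Lp.
  apply: msupp_in_mlext => w /validt validw; apply: msupp_inU.
  by rewrite /= L11_valid.
- exact: msupp_inD.
- exact: msupp_inZ.
Qed.

Section Annihilation.
Variables (d : nat) (r : CC) (A : pred Bas).
Hypothesis d_gt0 : (1 <= d)%N.
Hypothesis A_plus : forall p, A p -> inBplus d p.
Hypothesis A_stable : forall p q, A p -> L11_basis q -> msupp_in A (brA p q).

Lemma msupp_in_valid (x : LL) : msupp_in A x -> msupp_in (validB d) x.
Proof.
move=> /allP Ax; apply/allP => p /Ax /A_plus.
by case: p => [[[[i j] a] b]|] //= /andP[].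
Qed.

Lemma brr_stable (x y : LL) : msupp_in A x -> inL1 r y -> msupp_in A (brr r x y).
Proof.
move=> /allP Ax /inL1_L11 /allP Ly; rewrite brrE.
apply: msupp_in_mlext => p /Ax Ap; apply: msupp_in_mlext => q /Ly Lq.
rewrite rscale_id; first exact: A_stable.
by apply: mcoeff_outdom; apply/negP => /(allP (A_stable _ _ Ap Lq)) /A_plus.
Qed.

Lemma lmul_M1_inN t : inM1 r t -> forall x, msupp_in A x -> inN d r (lmul x t).
Proof.
elim=> {t} [| y t Ly Mt IHt | s t _ IHs _ IHt | c t _ IHt] x Ax.
- rewrite lmulE_swap mlextU; apply: inN_mlext => p /(allP Ax) /A_plus p_plus.
  exact: (@inNplus d r [::] p isT p_plus).
- set D := lmul x (lmul y t) - lmul y (lmul x t) - lmul (brr r x y) t.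
  have -> : lmul x (lmul y t) = D + lmul y (lmul x t) + lmul (brr r x y) t.
    by rewrite /D addrAC !subrK.
  have validy : msupp_in (validB d) y.
    by apply/allP => p /(allP (inL1_L11 Ly)); apply: L11_valid.
  apply: inNadd; [apply: inNadd|].
  + apply: inN_commutator; [exact: msupp_in_valid | exact: validy |].
    exact: inM1_valid d_gt0 Mt.
  + exact: inN_lmul validy (IHt x Ax).
  + exact/IHt/brr_stable.
- by rewrite lmulDr; apply: inNadd; [apply: IHs | apply: IHt].
- by rewrite lmulZr; apply/inNscale/IHt.
Qed.

End Annihilation.

(* Otherwise rewriting under sums of [vq] terms attempts to decide their
   equality by unfolding the finitely supported functions behind them. *)
Local Opaque vq.

Definition v1j_family (j : nat) (n : int) : pred Bas :=
  fun p => if p is Some (i', j', _, n') then [&& i' == 1%N, j' == j & n' == n]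
           else false.

Lemma brA_v1j_L11 j m n q : (1 < j)%N -> L11_basis q ->
  msupp_in (v1j_family j n) (brA (Some (1%N, j, m, n)) q).
Proof.
move=> lt1j; case: q => [[[[k l] c] e] /and3P[/eqP-> /eqP-> _]|_]; last first.
  exact: msupp_in0.
rewrite /brA (gtn_eqF lt1j) !scale_delta_false add0r addr0 vq_gt // vq_lt //.
by apply: msupp_inD; apply/msupp_inZ/msupp_inU; rewrite /= !eqxx.
Qed.

Lemma brA_vij_L11 i j m n q : (1 < i)%N -> (1 < j)%N -> L11_basis q ->
  brA (Some (i, j, m, n)) q = 0.
Proof.
move=> lt1i lt1j; case: q => [[[[k l] c] e] /and3P[/eqP-> /eqP-> _]|_] //.
by rewrite /brA (gtn_eqF lt1i) (gtn_eqF lt1j) !scale_delta_false !addr0.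
Qed.

Theorem lemma4p6 (d : nat) (r : CC) : (2 <= d)%N ->
  (forall (j : nat) (m n : int), (2 <= j <= d)%N -> 0 <= n ->
     forall t : TT, inM1 r t -> zeroM d r (lmul (vq 1 j m n) t)) /\
  (forall (i j : nat) (m n : int), (2 <= i)%N -> (i <= j)%N -> (j <= d)%N ->
     inBplus d (Some (i, j, m, n)) ->
     forall t : TT, inM1 r t -> zeroM d r (lmul (vq i j m n) t)).
Proof.
move=> lt1d; have d_gt0 : (1 <= d)%N := ltnW lt1d.
split=> [j m n /andP[lt1j le_jd] n_ge0 | i j m n lt1i le_ij le_jd vij_plus] t Mt.
- rewrite /zeroM vq_lt //; apply: (lmul_M1_inN d r (v1j_family j n)) => //.
  + case=> [[[[i' j'] k] n']|] //= /and3P[/eqP-> /eqP-> /eqP->].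
    by rewrite (ltnW lt1j) le_jd lt1j n_ge0 orbT.
  + case=> [[[[i' j'] k] n']|] // q /and3P[/eqP-> /eqP-> /eqP->].
    exact: brA_v1j_L11.
  + by apply: msupp_inU; rewrite /= !eqxx.
- rewrite /zeroM (vq_valid d) ?(andP vij_plus).1 //.
  apply: (lmul_M1_inN d r (pred1 (Some (i, j, m, n)))) => //.
  + by move=> p /eqP->.
  + move=> p q /eqP-> Lq; rewrite brA_vij_L11 ?msupp_in0 //.
    exact: leq_trans lt1i le_ij.
  + by apply: msupp_inU; rewrite /= eqxx.
Qed.
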